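(* Let $n\ge 2$, $1\le r\le n-1$, and let $p(q)=q^n+a_rq^r+a_{r-1}q^{r-1}+\dots+a_1q+a_0$ with $a_0,\dots,a_r\in\mathbb{H}$ and $a_r\neq 0$. Put $\lambda=\big(\max_{0\le j\le r}|a_j|\big)^{1/n}$. Then every zero $q\in\mathbb{H}$ of $p$ satisfies $$|q|\le \lambda+\lambda^2+\dots+\lambda^{r+1}.$$
   Context: $\mathbb{H}$ denotes the real quaternions with the Euclidean norm $|q|=\sqrt{q\bar q}$. The polynomial $p$ (whose coefficients of $q^{r+1},\dots,q^{n-1}$ vanish) has coefficients written to the left of the powers and is evaluated at $q\in\mathbb{H}$ by direct substitution, $p(q)=q^n+a_rq^r+\dots+a_1q+a_0$; a zero of $p$ is a $q\in\mathbb{H}$ with $p(q)=0$. *)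

From mathcomp Require Import all_boot all_order all_algebra.
From mathcomp Require Import all_classical all_reals all_analysis.
Set Implicit Arguments. Unset Strict Implicit. Unset Printing Implicit Defensive.
Import Order.TTheory GRing.Theory Num.Theory.
Local Open Scope ring_scope.

(* Real quaternions q = q0 + q1 i + q2 j + q3 k. *)
Record quat (R : realType) := Quat { q0 : R; q1 : R; q2 : R; q3 : R }.

Section Quat.
Variable R : realType.
Implicit Types p q : quat R.

Definition qzero : quat R := Quat 0 0 0 0.
Definition qone : quat R := Quat 1 0 0 0.
Definition qadd p q : quat R :=
  Quat (q0 p + q0 q) (q1 p + q1 q) (q2 p + q2 q) (q3 p + q3 q).
(* Hamilton product: i^2 = j^2 = k^2 = ijk = -1 *)
Definition qmul p q : quat R :=
  Quat (q0 p * q0 q - q1 p * q1 q - q2 p * q2 q - q3 p * q3 q)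
       (q0 p * q1 q + q1 p * q0 q + q2 p * q3 q - q3 p * q2 q)
       (q0 p * q2 q - q1 p * q3 q + q2 p * q0 q + q3 p * q1 q)
       (q0 p * q3 q + q1 p * q2 q - q2 p * q1 q + q3 p * q0 q).
Definition qnorm q : R :=
  Num.sqrt (q0 q ^+ 2 + q1 q ^+ 2 + q2 q ^+ 2 + q3 q ^+ 2).
Definition qpow q (k : nat) : quat R := iter k (qmul q) qone.

(* p(q) = q^n + a_r q^r + ... + a_1 q + a_0, coefficients on the left *)
Definition qpoly_eval (n r : nat) (a : nat -> quat R) q : quat R :=
  qadd (qpow q n)
       (foldr (fun j acc => qadd (qmul (a j) (qpow q j)) acc) qzero (iota 0 r.+1)).
End Quat.

(* The quaternion norm is multiplicative and subadditive, so [p(q) = 0]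
   yields the real inequality |q|^n <= lambda^n (1 + |q| + ... + |q|^r).
   If |q| > lambda, each term lambda^n |q|^j is at most |q|^(n-1) lambda^(j+1),
   because lambda^(n-1-j) <= |q|^(n-1-j); dividing by |q|^(n-1) gives the
   bound. *)
From mathcomp Require Import all_boot all_order all_algebra.
From mathcomp Require Import all_classical all_reals all_analysis.
From mathcomp Require Import ring lra zify.
Import Order.TTheory GRing.Theory Num.Theory.
Local Open Scope ring_scope.

Section QuatNorm.
Context {R : realType}.
Implicit Types p q : quat R.

Definition qnorm2 q : R := q0 q ^+ 2 + q1 q ^+ 2 + q2 q ^+ 2 + q3 q ^+ 2.

Definition qdot p q : R := q0 p * q0 q + q1 p * q1 q + q2 p * q2 q + q3 p * q3 q.

Lemma qnorm2_ge0 q : 0 <= qnorm2 q.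
Proof. by rewrite /qnorm2 !addr_ge0 ?sqr_ge0. Qed.

Lemma qnorm_ge0 q : 0 <= qnorm q.
Proof. exact: sqrtr_ge0. Qed.

Lemma sqr_qnorm q : qnorm q ^+ 2 = qnorm2 q.
Proof. by rewrite sqr_sqrtr // qnorm2_ge0. Qed.

(* Euler's four-square identity. *)
Lemma qnorm2_mul p q : qnorm2 (qmul p q) = qnorm2 p * qnorm2 q.
Proof. by rewrite /qnorm2 /=; ring. Qed.

Lemma qnorm_mul p q : qnorm (qmul p q) = qnorm p * qnorm q.
Proof. by rewrite /qnorm -sqrtrM ?qnorm2_ge0 // -!/(qnorm2 _) qnorm2_mul. Qed.

Lemma qnorm_one : qnorm (qone R) = 1.
Proof. by rewrite /qnorm /= expr1n expr0n /= !addr0 sqrtr1. Qed.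

Lemma qnorm_zero : qnorm (qzero R) = 0.
Proof. by rewrite /qnorm /= expr0n /= !addr0 sqrtr0. Qed.

Lemma qnorm_pow q k : qnorm (qpow q k) = qnorm q ^+ k.
Proof.
elim: k => [|k IHk]; first by rewrite expr0 qnorm_one.
by rewrite /qpow iterS -/(qpow q k) qnorm_mul IHk exprS.
Qed.

(* Lagrange's identity writes [|p|^2 |q|^2 - (p.q)^2] as a sum of squares. *)
Lemma qdot_le_mul_qnorm p q : qdot p q <= qnorm p * qnorm q.
Proof.
rewrite /qnorm -sqrtrM ?qnorm2_ge0 // -!/(qnorm2 _).
apply: le_trans (ler_norm _) _.
rewrite -sqrtr_sqr ler_sqrt ?mulr_ge0 ?qnorm2_ge0 // -subr_ge0.
have -> : qnorm2 p * qnorm2 q - qdot p q ^+ 2 =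
    (q0 p * q1 q - q1 p * q0 q) ^+ 2 + (q0 p * q2 q - q2 p * q0 q) ^+ 2 +
    (q0 p * q3 q - q3 p * q0 q) ^+ 2 + (q1 p * q2 q - q2 p * q1 q) ^+ 2 +
    (q1 p * q3 q - q3 p * q1 q) ^+ 2 + (q2 p * q3 q - q3 p * q2 q) ^+ 2.
  by rewrite /qnorm2 /qdot; ring.
by rewrite !addr_ge0 ?sqr_ge0.
Qed.

Lemma qnorm_add p q : qnorm (qadd p q) <= qnorm p + qnorm q.
Proof.
have qnorm2_add : qnorm2 (qadd p q) = qnorm2 p + qnorm2 q + 2 * qdot p q.
  by rewrite /qnorm2 /qdot /=; ring.
rewrite -(ger0_norm (addr_ge0 (qnorm_ge0 p) (qnorm_ge0 q))) -sqrtr_sqr.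
rewrite {1}/qnorm -/(qnorm2 _) ler_sqrt ?sqr_ge0 // qnorm2_add -!sqr_qnorm.
have := qdot_le_mul_qnorm p q; lra.
Qed.

Lemma qnorm_addr_eq0 p q : qadd p q = qzero R -> qnorm p = qnorm q.
Proof.
case: p q => [x0 x1 x2 x3] [y0 y1 y2 y3] [] /=.
by move=> /eqP; rewrite addr_eq0 => /eqP-> /eqP; rewrite addr_eq0 => /eqP->
  /eqP; rewrite addr_eq0 => /eqP-> /eqP; rewrite addr_eq0 => /eqP->;
  rewrite /qnorm /= !sqrrN.
Qed.

Lemma qnorm_sum_mul_pow (a : nat -> quat R) q s :
  qnorm (foldr (fun j acc => qadd (qmul (a j) (qpow q j)) acc) (qzero R) s)
  <= \sum_(j <- s) qnorm (a j) * qnorm q ^+ j.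
Proof.
elim: s => [|j s IHs]; first by rewrite big_nil qnorm_zero.
rewrite big_cons /=; apply: le_trans (qnorm_add _ _) _.
by rewrite qnorm_mul qnorm_pow lerD2l.
Qed.

Lemma qpoly_root_norm_le (n r : nat) (a : nat -> quat R) (M : R) q :
  (forall j, (j <= r)%N -> qnorm (a j) <= M) ->
  qpoly_eval n r a q = qzero R ->
  qnorm q ^+ n <= M * \sum_(j < r.+1) qnorm q ^+ j.
Proof.
move=> aM /qnorm_addr_eq0; rewrite qnorm_pow => ->.
apply: le_trans (qnorm_sum_mul_pow _ _ _) _.
rewrite mulr_sumr -(big_mkord xpredT (fun j => M * qnorm q ^+ j)) /index_iota subn0.
rewrite big_seq [X in _ <= X]big_seq; apply: ler_sum => j.
by rewrite mem_iota add0n => /andP[_ jr]; rewrite ler_wpM2r ?exprn_ge0 ?qnorm_ge0 ?aM.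
Qed.

End QuatNorm.

Section CauchyBound.
Context {R : realType}.

Lemma powR_invnK (x : R) (n : nat) : 0 <= x -> n != 0%N -> (x `^ n%:R^-1) ^+ n = x.
Proof.
move=> x0 n0; rewrite -powR_mulrn ?powR_ge0 // -powRrM mulVf ?powRr1 //.
by rewrite pnatr_eq0.
Qed.

Lemma ler_expr_mul_swap (l x : R) (i m : nat) : 0 <= l <= x -> (i <= m)%N ->
  l ^+ m * x ^+ i <= x ^+ m * l ^+ i.
Proof.
move=> /andP[l0 lx] /subnK <-; rewrite !exprD -!mulrA [l ^+ i * _]mulrC.
by rewrite ler_wpM2r ?mulr_ge0 ?exprn_ge0 ?(le_trans l0) // lerXn2r ?nnegrE ?(le_trans l0).
Qed.

Lemma real_root_bound (n r : nat) (l x : R) : (r < n)%N -> 0 <= l -> 0 <= x ->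
  x ^+ n <= l ^+ n * \sum_(j < r.+1) x ^+ j -> x <= \sum_(1 <= k < r.+2) l ^+ k.
Proof.
move=> rn l0 x0 xn.
have l_le_sum : l <= \sum_(1 <= k < r.+2) l ^+ k.
  by rewrite big_nat_recl // expr1 lerDl sumr_ge0 // => k _; rewrite exprn_ge0.
have [xl|lx] := leP x l; first exact: le_trans l_le_sum.
have x_gt0 : 0 < x by exact: le_lt_trans lx.
case: n rn xn => // m rn xn.
rewrite -(ler_pM2l (exprn_gt0 m x_gt0)) -exprSr; apply: le_trans xn _.
rewrite big_add1 big_mkord !mulr_sumr; apply: ler_sum => j _.
rewrite !exprS -mulrA [X in _ <= X]mulrCA ler_wpM2l //.
by rewrite ler_expr_mul_swap ?l0 ?(ltW lx) // -ltnS (leq_trans (ltn_ord j)).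
Qed.

End CauchyBound.

Theorem theorem3 (R : realType) (n r : nat) (a : nat -> quat R) (q : quat R) :
  (2 <= n)%N -> (1 <= r)%N -> (r <= n - 1)%N ->
  a r <> qzero R ->
  qpoly_eval n r a q = qzero R ->
  let lambda := (\big[Num.max/0]_(j < r.+1) qnorm (a j)) `^ (n%:R^-1) in
  qnorm q <= \sum_(1 <= k < r.+2) lambda ^+ k.
Proof.
move=> n2 _ rn _ pq0 /=.
set M := \big[Num.max/0]_(j < r.+1) qnorm (a j).
have aM j : (j <= r)%N -> qnorm (a j) <= M.
  by move=> jr; exact: (le_bigmax 0 (fun i : 'I_r.+1 => qnorm (a i)) (@Ordinal r.+1 j jr)).
have M0 : 0 <= M := le_trans (qnorm_ge0 _) (aM 0%N isT).
have lambda_expn : (M `^ n%:R^-1) ^+ n = M.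
  by apply: powR_invnK; rewrite // -lt0n (ltn_trans _ n2).
apply: (@real_root_bound R n).
- lia.
- exact: powR_ge0.
- exact: qnorm_ge0.
- by rewrite lambda_expn; exact: (qpoly_root_norm_le _ _ _ _ _ aM pq0).
Qed.
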